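(* Let $A$ be an $m\times m$ minimally non-totally unimodular matrix and let $x\in\mathbb{Q}^m$. The matrix $A'=[A\;x]$ obtained by adding the column $x$ to $A$ is totally equimodular if and only if $x=\mathbf 0$ or $x=\pm A^j$ for some column $A^j$ of $A$.
   Context: A matrix is totally unimodular if all its square submatrices have determinant in $\{0,\pm1\}$; it is minimally non-totally unimodular if it is not totally unimodular but all its proper submatrices are. An $m\times n$ matrix is equimodular if it has full row rank and all its nonzero $m\times m$ minors have the same absolute value; a matrix is totally equimodular if every set of linearly independent rows forms an equimodular matrix. *)

From HB Require Import structures.
From mathcomp Require Import all_boot all_order all_algebra.
Set Implicit Arguments. Unset Strict Implicit. Unset Printing Implicit Defensive.
Import Order.TTheory GRing.Theory Num.Theory.
Local Open Scope ring_scope.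

(* Totally unimodular: every square submatrix (rows f, columns g, injective
   index selections, possibly reordered -- reordering only changes the sign
   of the determinant) has determinant in {0, 1, -1}. *)
Definition totally_unimodular (m n : nat) (A : 'M[rat]_(m, n)) : Prop :=
  forall (k : nat) (f : 'I_k -> 'I_m) (g : 'I_k -> 'I_n),
    injective f -> injective g ->
    \det (mxsub f g A) \in [:: 0; 1; -1].

Definition minimally_non_TU (m n : nat) (A : 'M[rat]_(m, n)) : Prop :=
  ~ totally_unimodular A /\
  forall (p q : nat) (f : 'I_p -> 'I_m) (g : 'I_q -> 'I_n),
    injective f -> injective g -> (p < m)%N \/ (q < n)%N ->
    totally_unimodular (mxsub f g A).

Definition equimodular (p n : nat) (B : 'M[rat]_(p, n)) : Prop :=
  \rank B = p /\
  forall (g1 g2 : 'I_p -> 'I_n), injective g1 -> injective g2 ->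
    \det (colsub g1 B) != 0 -> \det (colsub g2 B) != 0 ->
    `|\det (colsub g1 B)| = `|\det (colsub g2 B)|.

Definition totally_equimodular (m n : nat) (B : 'M[rat]_(m, n)) : Prop :=
  forall (k : nat) (f : 'I_k -> 'I_m),
    injective f -> row_free (rowsub f B) -> equimodular (rowsub f B).

(* A minimally non-totally-unimodular A has det A outside {0, 1, -1}, while
   all its proper square submatrices have determinant in {0, 1, -1}.  Its
   cofactors are even all +-1: if C_rl = 0, the cofactors u of column l
   outside row r satisfy u N = det A e_l for a unimodular (m-1)-minor N, so by
   Cramer's rule each u_s is det A times a {0, 1, -1} entry of adj N, and the
   only such value in {0, 1, -1} is 0, contradicting det A <> 0.
   Put w = adj A x; replacing column i of A by x gives determinant w_i, so if
   [A x] is totally equimodular then |w_i| is 0 or |det A|.  Two nonzero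
   entries w_i, w_l are impossible: by a Jacobi identity every cofactor in
   column l of A_i(x) is +-C_lr +- C_ir, hence in {0, 2, -2}, while
   equimodularity of the rows other than r puts it in {0, 1, -1}; so that
   column has zero cofactors and det A_i(x) = 0.  Thus A w = det A x has a
   single term and x = +-A^j.  Conversely, every square submatrix of
   [A +-A^j] is a submatrix of A up to column signs, or has two proportional
   columns. *)

From mathcomp Require Import all_boot all_order all_algebra all_fingroup.
From mathcomp Require Import ring lra.
Import GRing.Theory Num.Theory.
Local Open Scope ring_scope.
Set Implicit Arguments. Unset Strict Implicit.

Notation unit3 := [:: 0; 1; -1].

Lemma unit3E (R : realDomainType) (a : R) : (a \in unit3) = (a == 0) || (`|a| == 1).
Proof. by rewrite !inE eqr_norml ler01 andbT. Qed.

Lemma unit3_sign (R : realDomainType) n (a : R) :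
  ((-1) ^+ n * a \in unit3) = (a \in unit3).
Proof. by rewrite !unit3E normrM normr_sign mul1r mulf_eq0 signr_eq0. Qed.

Lemma unit3_normr_mul (R : realDomainType) (a b d : R) :
  a \in unit3 -> b \in unit3 -> d \notin unit3 -> `|a| = `|d| * `|b| -> a = 0.
Proof.
rewrite !unit3E => /orP[/eqP // | /eqP a1] /orP[/eqP -> | /eqP ->].
  by move=> _ /eqP; rewrite a1 normr0 mulr0 oner_eq0.
by rewrite mulr1 => + ad; rewrite -ad a1 eqxx orbT.
Qed.

Lemma normr_eq1P (R : realDomainType) (a : R) : `|a| = 1 -> a = 1 \/ a = -1.
Proof. by move/eqP; rewrite eqr_norml ler01 andbT => /orP[] /eqP; [left | right]. Qed.

Lemma unit3M (R : realDomainType) (a b : R) :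
  a \in unit3 -> b \in unit3 -> a * b \in unit3.
Proof.
rewrite !unit3E mulf_eq0 normrM => /orP[-> // | /eqP ->] /orP[-> | /eqP ->].
  by rewrite orbT.
by rewrite mulr1 eqxx !orbT.
Qed.

Lemma ltn_pred_ord m (i : 'I_m) : (m.-1 < m)%N.
Proof. by rewrite ltn_predL (leq_ltn_trans (leq0n i) (ltn_ord i)). Qed.

Lemma leq_of_injective_ord k m (f : 'I_k -> 'I_m) : injective f -> (k <= m)%N.
Proof. by move/leq_card; rewrite !card_ord. Qed.

Lemma normr_det_mxsub_full (R : numDomainType) k m (A : 'M[R]_m)
    (f g : 'I_k -> 'I_m) :
  injective f -> injective g -> ~~ (k < m)%N -> `|\det (mxsub f g A)| = `|\det A|.
Proof.
move=> injf injg; rewrite -leqNgt => le_mk.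
have km : k = m by apply/eqP; rewrite eqn_leq le_mk (leq_of_injective_ord injf).
subst k; have -> : mxsub f g A = perm_mx (perm injf) *m A *m perm_mx (perm injg)^-1.
  by rewrite -row_permE -col_permE; apply/matrixP => a b; rewrite !mxE !permE.
by rewrite !det_mulmx !det_perm !normrM !normr_sign mul1r mulr1.
Qed.

Lemma row_free_det_colsub (R : fieldType) k n (B : 'M[R]_(k, n)) (g : 'I_k -> 'I_n) :
  \det (colsub g B) != 0 -> row_free B.
Proof.
move=> detB; have : row_free (colsub g B) by rewrite row_free_unit unitmxE unitfE.
rewrite /row_free !eqn_leq !rank_leq_row /= => /leq_trans; apply.
have -> : colsub g B = B *m \matrix_(a, b) (a == g b)%:R.
  apply/matrixP => a b; rewrite !mxE (bigD1 (g b)) //= mxE eqxx mulr1 big1 ?addr0 //.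
  by move=> c /negbTE nc; rewrite mxE nc mulr0.
exact: mxrankM_maxl.
Qed.

Lemma cofactor_unit3 (R : realDomainType) m (A : 'M[R]_m) r c :
  \det (mxsub (lift r) (lift c) A) \in unit3 -> cofactor A r c \in unit3.
Proof. by rewrite /cofactor unit3_sign mxsubrc. Qed.

Lemma mulmx_col_support (R : comPzSemiRingType) m n (A : 'M[R]_(m, n))
    (w : 'cV[R]_n) j :
  (forall c, c != j -> w c 0 = 0) -> A *m w = w j 0 *: col j A.
Proof.
move=> w0; apply/matrixP => a z; rewrite (ord1 z) !mxE (bigD1 j) //= big1 ?addr0.
  by rewrite mulrC.
by move=> c cj; rewrite w0 ?mulr0.
Qed.

Lemma adj_row_mul_minor (R : comPzRingType) m (A : 'M[R]_m) r j l' :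
  cofactor A r (lift j l') = 0 ->
  \row_s \adj A (lift j l') (lift r s) *m row' r (col' j A) = \det A *: delta_mx 0 l'.
Proof.
move=> cof0; apply/matrixP => z b; rewrite (ord1 z) !mxE.
have := congr1 (fun M : 'M_m => M (lift j l') (lift j b)) (mul_adj_mx A).
rewrite /= !mxE (bigD1_ord r) //= mxE cof0 mul0r add0r (inj_eq (@lift_inj _ j)).
by rewrite eq_sym mulr_natr => <-; apply: eq_bigr => s _; rewrite !mxE.
Qed.

Lemma mxsub_row_mx_scale_col (R : comPzRingType) p m k (A : 'M[R]_(p, m)) j e
    (f : 'I_k -> 'I_p) (g : 'I_k -> 'I_(m + 1)) :
  mxsub f g (row_mx A (e *: col j A)) =
  mxsub f (fun b => if split (g b) is inl a then a else j) A *m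
    diag_mx (\row_b if split (g b) is inl _ then 1 else e).
Proof.
apply/matrixP => a b; rewrite mul_mx_diag !mxE.
by case: split => c; rewrite ?mulr1 // !mxE mulrC.
Qed.

Section ReplaceCol.
Variable m : nat.

Definition replace_col_index (i b : 'I_m) : 'I_(m + 1) :=
  if b == i then rshift m (ord0 : 'I_1) else lshift 1 b.

Lemma replace_col_index_inj i : injective (replace_col_index i).
Proof.
rewrite /replace_col_index => b1 b2.
case: eqP => [-> | _]; case: eqP => [-> // | _] => /(congr1 val) /=.
- by move=> E; move: (ltn_ord b2); rewrite -E addn0 ltnn.
- by move=> E; move: (ltn_ord b1); rewrite E addn0 ltnn.
- exact: val_inj.
Qed.

Definition replace_col (R : Type) (i : 'I_m) (x : 'cV[R]_m) (A : 'M[R]_m) :=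
  \matrix_(a, b) if b == i then x a 0 else A a b.

Lemma replace_colE (R : Type) i (x : 'cV[R]_m) A a b :
  replace_col i x A a b = if b == i then x a 0 else A a b.
Proof. exact: mxE. Qed.

Lemma colsub_replace_col_index (R : Type) i (x : 'cV[R]_m) A :
  colsub (replace_col_index i) (row_mx A x) = replace_col i x A.
Proof.
apply/matrixP => a b; rewrite [LHS]mxE [RHS]mxE /replace_col_index.
by case: eqP => _; rewrite ?row_mxEr ?row_mxEl.
Qed.

Lemma det_replace_col (R : comPzRingType) i (x : 'cV[R]_m) A :
  \det (replace_col i x A) = (\adj A *m x) i 0.
Proof.
rewrite (expand_det_col _ i) [RHS]mxE; apply: eq_bigr => a _.
rewrite !mxE eqxx mulrC; congr (_ * _); rewrite /cofactor; congr (_ * \det _).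
by apply/matrixP => p q; rewrite !mxE eq_sym (negbTE (neq_lift _ _)).
Qed.

(* A Jacobi identity; the hypothesis on w_i is only used to cancel w_i. *)
Lemma det_mul_cofactor_replace_col (R : idomainType) i l (x : 'cV[R]_m) A r :
  i != l -> (\adj A *m x) i 0 != 0 ->
  \det A * cofactor (replace_col i x A) r l =
  (\adj A *m x) i 0 * \adj A l r - (\adj A *m x) l 0 * \adj A i r.
Proof.
move=> il wi_neq0; set w := \adj A *m x; set A' := replace_col i x A.
have wE k : \sum_j \adj A k j * x j 0 = w k 0 by rewrite mxE.
set v := row l (\adj A').
have vA' c : (v *m A') 0 c = w i 0 * (l == c)%:R.
  by rewrite -row_mul mul_adj_mx !mxE wE mulr_natr /A' det_replace_col.
set b := (v *m A) 0 i.
have vA : v *m A = w i 0 *: delta_mx 0 l + b *: delta_mx 0 i.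
  apply/matrixP => z c; rewrite (ord1 z) [RHS]mxE !mxE !eqxx /=.
  have [-> | ci] := eqVneq c i.
    by rewrite (negbTE il) mulr0 add0r mulr1 /b mxE.
  rewrite mulr0 addr0 eq_sym wE -vA' mxE; apply: eq_bigr => s _.
  by rewrite replace_colE (negbTE ci).
have vx : (v *m x) 0 0 = 0.
  have := vA' i; rewrite eq_sym (negbTE il) mulr0 => <-.
  by rewrite !mxE; apply: eq_bigr => s _; rewrite replace_colE eqxx.
have Aw : A *m w = \det A *: x by rewrite mulmxA mul_mx_adj mul_scalar_mx.
have b_eq : b = - w l 0.
  have := congr1 (fun M : 'M_(1, 1) => M 0 0) (esym (mulmxA v A w)).
  rewrite /= Aw -scalemxAr [X in _ = X -> _]mxE vx mulr0 vA mulmxDl.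
  rewrite -!scalemxAl -!rowE !mxE !wE => /eqP.
  rewrite mulrC -mulrDl mulf_eq0 (negbTE wi_neq0) orbF addr_eq0 => /eqP ->.
  by rewrite opprK.
have := congr1 (fun M : 'M_(1, m) => M 0 r) (esym (mulmxA v A (\adj A))).
rewrite /= mul_mx_adj mul_mx_scalar vA mulmxDl -!scalemxAl -!rowE !mxE b_eq.
by rewrite !wE mulNr => <-.
Qed.

End ReplaceCol.

Lemma totally_equimodular_normr_det m n (B : 'M[rat]_(m, n)) k
    (f : 'I_k -> 'I_m) (g1 g2 : 'I_k -> 'I_n) :
  totally_equimodular B -> injective f -> injective g1 -> injective g2 ->
  \det (mxsub f g1 B) != 0 -> \det (mxsub f g2 B) != 0 ->
  `|\det (mxsub f g1 B)| = `|\det (mxsub f g2 B)|.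
Proof.
move=> teB injf injg1 injg2 det1 det2.
have rf : row_free (rowsub f B).
  by apply: (@row_free_det_colsub _ _ _ _ g1); rewrite -mxsubcr.
have [_ eqm] := teB k f injf rf.
by rewrite (mxsubcr f g1) (mxsubcr f g2); apply: eqm; rewrite // -mxsubcr.
Qed.

Section TotallyEquimodularRowMx.
Variables (m : nat) (A : 'M[rat]_m) (x : 'cV[rat]_m).
Hypothesis teAx : totally_equimodular (row_mx A x).

Lemma normr_det_replace_col i :
  \det A != 0 -> \det (replace_col i x A) != 0 ->
  `|\det (replace_col i x A)| = `|\det A|.
Proof.
have subA : mxsub id (lshift 1) (row_mx A x) = A.
  by apply/matrixP => a b; rewrite mxE row_mxEl.
rewrite -colsub_replace_col_index => detA det_i.
have := @totally_equimodular_normr_det _ _ _ _ id (replace_col_index i) (lshift 1) teAx.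
by rewrite subA; apply => //; [exact: replace_col_index_inj | exact: lshift_inj].
Qed.

Lemma cofactor_replace_col_unit3 r i l :
  `|cofactor A r i| = 1 -> cofactor (replace_col i x A) r l \in unit3.
Proof.
move=> cof1; apply: cofactor_unit3.
have subA : mxsub (lift r) (lshift 1 \o lift i) (row_mx A x) = mxsub (lift r) (lift i) A.
  by apply/matrixP => a b; rewrite [LHS]mxE [RHS]mxE row_mxEl.
have subAx : mxsub (lift r) (replace_col_index i \o lift l) (row_mx A x) =
    mxsub (lift r) (lift l) (replace_col i x A).
  by rewrite -colsub_replace_col_index; apply/matrixP => a b; rewrite !mxE.
have detA1 : `|\det (mxsub (lift r) (lift i) A)| = 1.
  by move: cof1; rewrite /cofactor normrM normr_sign mul1r mxsubrc.
rewrite unit3E -subAx.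
set B := mxsub _ _ (row_mx A x).
have [-> // | det_neq0] := eqVneq (\det B) 0.
rewrite /= -detA1 -subA; apply/eqP/totally_equimodular_normr_det => //.
- exact: lift_inj.
- exact/inj_comp/lift_inj/replace_col_index_inj.
- exact/inj_comp/lift_inj/lshift_inj.
- by rewrite subA -normr_eq0 detA1 oner_eq0.
Qed.

End TotallyEquimodularRowMx.

Section MinimallyNonTotallyUnimodular.
Variables (m : nat) (A : 'M[rat]_m).
Hypothesis mnA : minimally_non_TU A.

Lemma det_mxsub_proper k (f g : 'I_k -> 'I_m) :
  injective f -> injective g -> (k < m)%N -> \det (mxsub f g A) \in unit3.
Proof.
move=> injf injg km; have [_ sub] := mnA.
have := sub k k f g injf injg (or_introl km) k id id (@inj_id _) (@inj_id _).
by rewrite mxsub_id.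
Qed.

Lemma det_mnTU : \det A \notin unit3.
Proof.
have [nTU _] := mnA; apply/negP => detA; apply: nTU => k f g injf injg.
have [km | ] := ltnP k m; first exact: det_mxsub_proper.
rewrite leqNgt => /(normr_det_mxsub_full A injf injg) detE.
by move: detA; rewrite !unit3E -normr_eq0 -detE normr_eq0.
Qed.

Lemma det_mnTU_neq0 : \det A != 0.
Proof. by apply: contraNneq det_mnTU => ->; rewrite inE eqxx. Qed.

Lemma cofactor_mnTU r c : cofactor A r c \in unit3.
Proof.
apply/cofactor_unit3/det_mxsub_proper; try exact: lift_inj.
exact: ltn_pred_ord r.
Qed.

Lemma cofactor_mnTU_neq0 r l : cofactor A r l != 0.
Proof.
apply/negP => /eqP cof0.
have [j cofj] : exists j, cofactor A r j != 0.
  apply/existsP; apply: contraR det_mnTU_neq0; rewrite negb_exists => /forallP cof0'.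
  rewrite (expand_det_row _ r) big1 // => j _.
  by rewrite (eqP (negbNE (cof0' j))) mulr0.
have /unlift_some[l' def_l _] : j != l by apply: contraNneq cofj => ->; rewrite cof0.
rewrite {l}def_l in cof0.
set N := row' r (col' j A); set u := \row_s \adj A (lift j l') (lift r s).
have N1 : `|\det N| = 1.
  move: (cofactor_mnTU r j) cofj; rewrite unit3E => /orP[/eqP -> | ].
    by rewrite eqxx.
  by rewrite /cofactor normrM normr_sign mul1r => /eqP.
have uN : u *m N = \det A *: delta_mx 0 l' by exact: adj_row_mul_minor.
have uadj s : \det N * u 0 s = \det A * \adj N l' s.
  have := congr1 (fun M : 'rV_(m.-1) => M 0 s) (esym (mulmxA u N (\adj N))).
  by rewrite /= mul_mx_adj uN mul_mx_scalar -scalemxAl -rowE !mxE mulrC => ->.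
have u0 : u = 0.
  apply/matrixP => z s; rewrite (ord1 z) [RHS]mxE.
  apply: (@unit3_normr_mul _ _ (\adj N l' s) (\det A)).
  - by rewrite !mxE; apply: cofactor_mnTU.
  - rewrite mxE; apply: cofactor_unit3.
    rewrite /N row'Esub col'Esub -mxsubrc -mxsub_comp.
    apply: det_mxsub_proper; try exact/inj_comp/lift_inj/lift_inj.
    exact: leq_ltn_trans (leq_pred _) (ltn_pred_ord r).
  - exact: det_mnTU.
  - by rewrite -normrM -uadj normrM N1 mul1r.
move/matrixP/(_ 0 l'): uN; rewrite u0 mul0mx !mxE !eqxx mulr1 => /esym/eqP.
by rewrite (negbTE det_mnTU_neq0).
Qed.

Lemma normr_cofactor_mnTU r c : `|cofactor A r c| = 1.
Proof.
move: (cofactor_mnTU r c) (cofactor_mnTU_neq0 r c); rewrite unit3E.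
by case/orP => [-> // | /eqP].
Qed.

End MinimallyNonTotallyUnimodular.

Section TotallyEquimodularRowMxMinimal.
Variables (m : nat) (A : 'M[rat]_m) (x : 'cV[rat]_m).
Hypotheses (mnA : minimally_non_TU A) (teAx : totally_equimodular (row_mx A x)).
Let w := \adj A *m x.

Lemma normr_adj_mul i : w i 0 != 0 -> `|w i 0| = `|\det A|.
Proof.
rewrite /w -det_replace_col => wi.
exact: normr_det_replace_col (det_mnTU_neq0 mnA) wi.
Qed.

Lemma adj_mul_eq0 i l : i != l -> w i 0 != 0 -> w l 0 = 0.
Proof.
move=> il wi; apply/eqP/negP => /negP wl.
have detA := det_mnTU_neq0 mnA.
have cof0 r : cofactor (replace_col i x A) r l = 0.
  have /normr_eq1P ei : `|w i 0 / \det A| = 1.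
    by rewrite normf_div normr_adj_mul // divff // normr_eq0.
  have /normr_eq1P el : `|w l 0 / \det A| = 1.
    by rewrite normf_div normr_adj_mul // divff // normr_eq0.
  have /normr_eq1P ai : `|\adj A i r| = 1 by rewrite mxE normr_cofactor_mnTU.
  have /normr_eq1P al : `|\adj A l r| = 1 by rewrite mxE normr_cofactor_mnTU.
  have cofE : cofactor (replace_col i x A) r l =
      w i 0 / \det A * \adj A l r - w l 0 / \det A * \adj A i r.
    by apply: (mulfI detA); rewrite det_mul_cofactor_replace_col //; field.
  have := cofactor_replace_col_unit3 teAx l (normr_cofactor_mnTU mnA r i).
  rewrite unit3E => /orP[/eqP // | /eqP /normr_eq1P c1].
  by move: cofE; case: c1 => ->; case: ei => ->; case: el => ->;
    case: ai => ->; case: al => ->; lra.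
move: wi; rewrite /w -det_replace_col (expand_det_col _ l) big1 ?eqxx // => a _.
by rewrite cof0 mulr0.
Qed.

Lemma col_of_totally_equimodular_row_mx :
  x = 0 \/ exists j, x = col j A \/ x = - col j A.
Proof.
have detA := det_mnTU_neq0 mnA.
have Aw : A *m w = \det A *: x by rewrite /w mulmxA mul_mx_adj mul_scalar_mx.
have [j wj | w0] := pickP (fun j => w j 0 != 0); last first.
  left; apply: (scalerI detA); rewrite scaler0 -Aw.
  suff -> : w = 0 by rewrite mulmx0.
  by apply/matrixP => c z; rewrite (ord1 z) [RHS]mxE; apply/eqP/negbFE; exact: w0.
right; exists j.
have {}Aw : \det A *: x = w j 0 *: col j A.
  rewrite -Aw; apply: mulmx_col_support => c cj.
  by apply: (adj_mul_eq0 _ wj); rewrite eq_sym.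
move/eqP: (normr_adj_mul wj); rewrite eqr_norm2 => /orP[] /eqP wjE.
all: rewrite wjE in Aw.
- by left; apply: (scalerI detA).
- by right; apply: (scalerI detA); rewrite Aw scaleNr scalerN.
Qed.

End TotallyEquimodularRowMxMinimal.

Lemma mnTU_dim_gt0 m (A : 'M[rat]_m) : minimally_non_TU A -> (0 < m)%N.
Proof. by case: m A => // A /det_mnTU; rewrite det_mx00 !inE eqxx orbT. Qed.

Lemma totally_equimodular_row_mx_scale_col m (A : 'M[rat]_m) j e :
  minimally_non_TU A -> e \in unit3 ->
  totally_equimodular (row_mx A (e *: col j A)).
Proof.
move=> mnA e3 k f injf rf; split; first exact/eqP.
set B := rowsub f _.
suff normE g : injective g -> \det (colsub g B) != 0 ->
    `|\det (colsub g B)| = if (k < m)%N then 1 else `|\det A|.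
  by move=> g1 g2 injg1 injg2 det1 det2; rewrite !normE.
rewrite /B -mxsubcr mxsub_row_mx_scale_col det_mulmx det_diag mulf_eq0 negb_or.
set h := fun b => _; set s := \prod_b _ => injg /andP[detA_neq0 s_neq0].
have s1 : `|s| = 1.
  have : s \in unit3.
    apply: (big_ind (fun a => a \in unit3)); [by rewrite !inE eqxx orbT | exact: unit3M |].
    by move=> b _; rewrite mxE; case: split => _ //; rewrite !inE eqxx orbT.
  by rewrite unit3E (negbTE s_neq0) => /eqP.
have /injectiveP injh : injectiveb h.
  apply/injectivePn => -[b1 [b2 b12 hb12]]; move: detA_neq0.
  rewrite -det_tr (determinant_alternate b12) ?eqxx // => a.
  by rewrite !mxE hb12.
rewrite normrM s1 mulr1; case: ifP => [km | /negbT km].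
  move: (det_mxsub_proper mnA injf injh km) detA_neq0.
  by rewrite unit3E => /orP[/eqP -> | /eqP]; rewrite ?eqxx.
exact: normr_det_mxsub_full.
Qed.

Theorem mainTheorem9 (m : nat) (A : 'M[rat]_m) (x : 'cV[rat]_m) :
  minimally_non_TU A ->
  (totally_equimodular (row_mx A x) <->
   (x = 0 \/ exists j : 'I_m, x = col j A \/ x = - col j A)).
Proof.
move=> mnA; split; first exact: col_of_totally_equimodular_row_mx.
have scale_col j e : e \in unit3 -> totally_equimodular (row_mx A (e *: col j A)).
  exact: totally_equimodular_row_mx_scale_col.
case=> [-> | [j [-> | ->]]].
- rewrite -(scale0r (col (Ordinal (mnTU_dim_gt0 mnA)) A)).
  by apply: scale_col; rewrite inE eqxx.
- by rewrite -(scale1r (col j A)); apply: scale_col; rewrite !inE eqxx orbT.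
- by rewrite -scaleN1r; apply: scale_col; rewrite !inE eqxx !orbT.
Qed.
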